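(* Let $A$ be a graded Frobenius algebra of Gorenstein parameter $-\ell$. For $0\le i,j\le\ell$, the map $A_{j-i}\to\mathrm{Hom}_{A^o}(A_{\ge i}(i),A_{\ge j}(j))$, $a\mapsto(\,\cdot\,a)$ (right multiplication by $a$), is an isomorphism.
   Context: Graded algebras are $\mathbb{N}$-graded algebras over an algebraically closed field $k$; $A_m=0$ for $m<0$. $M(n)_m=M_{n+m}$, $A_{\ge i}=\bigoplus_{m\ge i}A_m$, $D(M)=\bigoplus_m\mathrm{Hom}_k(M_{-m},k)$. $A$ is graded Frobenius of Gorenstein parameter $-\ell$ if it is locally finite and $D(A)\cong A(\ell)$ as graded right $A$-modules. $\mathrm{Hom}_{A^o}$ denotes degree-preserving homomorphisms of graded left $A$-modules. *)

From HB Require Import structures.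
From mathcomp Require Import all_boot all_order all_algebra.
Set Implicit Arguments. Unset Strict Implicit. Unset Printing Implicit Defensive.
Import Order.TTheory GRing.Theory Num.Theory.
Local Open Scope ring_scope.

(* A graded k-algebra is modelled as a k-algebra A together with a family
   G : int -> {pred A} of homogeneous components, G m = A_m. *)

Definition is_subspace (k : fieldType) (A : algType k) (S : {pred A}) : Prop :=
  [/\ 0 \in S, (forall x y, x \in S -> y \in S -> x + y \in S)
    & (forall (c : k) x, x \in S -> c *: x \in S)].

Definition finite_dim (k : fieldType) (A : algType k) (S : {pred A}) : Prop :=
  exists bs : seq A, all (mem S) bs /\
    forall x, x \in S -> exists cs : seq k,
      x = \sum_(i < size bs) cs`_i *: bs`_i.

Definition graded_algebra (k : fieldType) (A : algType k) (G : int -> {pred A}) : Prop :=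
  [/\ forall m, is_subspace (G m),
      forall m, m < 0 -> forall x, x \in G m -> x = 0,
      forall x : A, exists s : seq int, exists xs : int -> A,
        (forall m, xs m \in G m) /\ x = \sum_(m <- s) xs m,
      forall (s : seq int) (xs : int -> A), uniq s -> (forall m, xs m \in G m) ->
        \sum_(m <- s) xs m = 0 -> forall m, m \in s -> xs m = 0 &
      (1 \in G 0 /\
      forall m n x y, x \in G m -> y \in G n -> x * y \in G (m + n))].

Definition locally_finite (k : fieldType) (A : algType k) (G : int -> {pred A}) : Prop :=
  forall m, finite_dim (G m).

Definition A_ge (k : fieldType) (A : algType k) (G : int -> {pred A}) (i : int) (x : A) : Prop :=
  exists s : seq int, exists xs : int -> A,
    all (fun m => i <= m) s /\ (forall m, xs m \in G m) /\ x = \sum_(m <- s) xs m.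

(* k-linear functionals on the subspace S (elements of Hom_k(S, k)),
   represented by functions A -> k, considered only on S. *)
Definition lin_functional_on (k : fieldType) (A : algType k) (S : {pred A}) (g : A -> k) : Prop :=
  (forall y1 y2, y1 \in S -> y2 \in S -> g (y1 + y2) = g y1 + g y2) /\
  (forall (c : k) y, y \in S -> g (c *: y) = c * g y).

(* Graded Frobenius of Gorenstein parameter -l: locally finite and
   D(A) ~= A(l) as graded right A-modules.  Here phi m x is the image of
   x \in A(l)_m = A_{l+m} in D(A)_m = Hom_k(A_{-m}, k); the right A-action
   on D(A) is (f . a)(y) = f (a y). *)
Definition graded_frobenius (k : fieldType) (A : algType k) (G : int -> {pred A}) (l : int) : Prop :=
  graded_algebra G /\ locally_finite G /\
  exists phi : int -> A -> A -> k,
    [/\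
        forall m x, x \in G (l + m) -> lin_functional_on (G (- m)) (phi m x),
        forall m x1 x2 y, x1 \in G (l + m) -> x2 \in G (l + m) -> y \in G (- m) ->
          phi m (x1 + x2) y = phi m x1 y + phi m x2 y,
        forall m (c : k) x y, x \in G (l + m) -> y \in G (- m) ->
          phi m (c *: x) y = c * phi m x y,
        (forall m x, x \in G (l + m) -> (forall y, y \in G (- m) -> phi m x y = 0) -> x = 0) /\
        (forall m (g : A -> k), lin_functional_on (G (- m)) g ->
          exists2 x, x \in G (l + m) & forall y, y \in G (- m) -> phi m x y = g y)
      &
        forall m n x a y, x \in G (l + m) -> a \in G n -> y \in G (- (m + n)) ->
          phi (m + n) (x * a) y = phi m x (a * y)].

(* Degree-preserving homomorphisms of graded left A-modules
   A_{>= i}(i) -> A_{>= j}(j), represented by functions A -> A considered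
   only on A_{>= i}: k-linear, left A-linear, and sending
   A_{>=i}(i)_m = A_{i+m} into A_{>=j}(j)_m = A_{j+m}. *)
Definition graded_hom_shift (k : fieldType) (A : algType k) (G : int -> {pred A})
    (i j : int) (f : A -> A) : Prop :=
  [/\ forall x y, A_ge G i x -> A_ge G i y -> f (x + y) = f x + f y,
      forall (c : k) x, A_ge G i x -> f (c *: x) = c *: f x,
      forall (b : A) x, A_ge G i x -> f (b * x) = b * f x
    & forall m x, 0 <= m -> x \in G (i + m) -> f x \in G (j + m)].

From HB Require Import structures.
From mathcomp Require Import all_boot all_order all_algebra.
From mathcomp Require Import zify.
Import Order.TTheory GRing.Theory Num.Theory.
Set Implicit Arguments. Unset Strict Implicit. Unset Printing Implicit Defensive.
Local Open Scope ring_scope.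

(* Let [eps x := phi 0 x 1] be the Frobenius form on [A_l].  Compatibility of
   [phi] with the right action makes [(x, y) |-> eps (x * y)] a pairing
   [A_d * A_(l-d) -> k] for which [x |-> eps (x * _)] identifies [A_(l-d)]
   with the dual of [A_d].  A rank count on the finite-dimensional components
   shows that [a |-> eps (_ * a)] identifies [A_d] with the dual of [A_(l-d)]
   as well.  Since [j <= l], [A_(l-(j-i))] lies in [A_(>=i)], which gives
   injectivity.  For surjectivity, represent [v |-> eps (f v)] on [A_(l-(j-i))]
   as [eps (v * a)]; for homogeneous [x] and [z] of complementary degree,
   [eps (z * (f x - x * a)) = eps (f (z * x)) - eps (z * x * a) = 0], so
   [f x = x * a] by nondegeneracy. *)

Definition lincomb (k : fieldType) (A : algType k) (us : seq A)
    (c : 'rV[k]_(size us)) : A :=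
  \sum_(r < size us) c 0 r *: us`_r.
Arguments lincomb {k A} us c.

Definition spanning_seq (k : fieldType) (A : algType k) (S : {pred A})
    (bs : seq A) : Prop :=
  all (mem S) bs /\
  forall x, x \in S -> exists cs : seq k, x = \sum_(i < size bs) cs`_i *: bs`_i.

Lemma submx_of_same_kernel (F : fieldType) (p q : nat) (B C : 'M[F]_(p, q)) :
  (C <= B)%MS -> (forall c : 'rV_p, (c *m B == 0) = (c *m C == 0)) -> (B <= C)%MS.
Proof.
move=> sCB kerBC; rewrite -(geq_leqif (mxrank_leqif_sup sCB)).
have : (kermx C <= kermx B)%MS.
  rewrite sub_kermx; apply/eqP/row_matrixP => r.
  by rewrite row_mul row0; apply/eqP; rewrite kerBC -row_mul mulmx_ker row0.
by move/mxrankS; rewrite !mxrank_ker; have := rank_leq_row B; have := rank_leq_row C; lia.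
Qed.

Section LinearFunctionals.
Variables (k : fieldType) (A : algType k) (S : {pred A}).
Hypothesis S_subspace : is_subspace S.

Lemma lin_functional0 h : lin_functional_on S h -> h 0 = 0.
Proof.
by have [S0 _ _] := S_subspace => -[_ hZ]; rewrite -(scale0r (0 : A)) hZ // mul0r.
Qed.

Lemma lin_functionalB h x y : lin_functional_on S h -> x \in S -> y \in S ->
  h (x - y) = h x - h y.
Proof.
have [_ SD SZ] := S_subspace => -[hD hZ] Sx Sy.
by rewrite -scaleN1r hD ?hZ ?mulN1r //; apply: SZ.
Qed.

Lemma subspaceB x y : x \in S -> y \in S -> x - y \in S.
Proof.
by have [_ SD SZ] := S_subspace => Sx Sy; rewrite -scaleN1r; apply: SD => //; apply: SZ.
Qed.

Lemma subspace_sum (I : Type) (s : seq I) (c : I -> k) (z : I -> A) :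
  (forall r, z r \in S) -> \sum_(r <- s) c r *: z r \in S.
Proof.
have [S0 SD SZ] := S_subspace => Sz.
by elim: s => [|r s IHs]; rewrite ?big_nil ?big_cons //; apply: SD => //; apply: SZ.
Qed.

Lemma lin_functional_sum h (I : Type) (s : seq I) (c : I -> k) (z : I -> A) :
  lin_functional_on S h -> (forall r, z r \in S) ->
  h (\sum_(r <- s) c r *: z r) = \sum_(r <- s) c r * h (z r).
Proof.
have [_ SD SZ] := S_subspace => -[hD hZ] Sz.
elim: s => [|r s IHs]; first by rewrite !big_nil (lin_functional0 (conj hD hZ)).
by rewrite !big_cons hD ?hZ ?IHs //; [apply: SZ | apply: subspace_sum].
Qed.

Lemma lincomb_mem us c : all (mem S) us -> lincomb us c \in S.
Proof. by move=> Sus; apply: subspace_sum => r; apply: (allP Sus); apply: mem_nth. Qed.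

Lemma lin_functional_lincomb h us c : lin_functional_on S h -> all (mem S) us ->
  h (lincomb us c) = \sum_(r < size us) c 0 r * h us`_r.
Proof.
by move=> h_lin Sus; apply: lin_functional_sum => // r; apply: (allP Sus); apply: mem_nth.
Qed.

Lemma spanning_seq_lincomb bs x : spanning_seq S bs -> x \in S ->
  exists c, x = lincomb bs c.
Proof.
move=> [_ bs_span] /bs_span[cs ->]; exists (\row_i cs`_i).
by apply: eq_bigr => r _; rewrite mxE.
Qed.

Lemma lin_functional_eq_on_span h1 h2 bs :
  lin_functional_on S h1 -> lin_functional_on S h2 -> spanning_seq S bs ->
  (forall s : 'I_(size bs), h1 bs`_s = h2 bs`_s) -> {in S, h1 =1 h2}.
Proof.
move=> h1_lin h2_lin bs_span eq_h x /(spanning_seq_lincomb bs_span)[c ->].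
have [Sbs _] := bs_span.
by rewrite !lin_functional_lincomb //; apply: eq_bigr => r _; rewrite eq_h.
Qed.

Lemma lin_functional_eq0_on_span h bs :
  lin_functional_on S h -> spanning_seq S bs ->
  (forall s : 'I_(size bs), h bs`_s = 0) -> {in S, h =1 fun=> 0}.
Proof.
move=> h_lin bs_span; apply: lin_functional_eq_on_span => //.
by split=> *; rewrite ?addr0 ?mulr0.
Qed.

Lemma mulmx_functional_coef q (h : 'I_q -> A -> k) us c s :
  (forall s, lin_functional_on S (h s)) -> all (mem S) us ->
  (c *m \matrix_(r < size us, s < q) h s us`_r) 0 s = h s (lincomb us c).
Proof.
move=> h_lin Sus; rewrite mxE lin_functional_lincomb //.
by apply: eq_bigr => r _; rewrite mxE.
Qed.

End LinearFunctionals.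

Section GradedAlgebra.
Variables (k : fieldType) (A : algType k) (G : int -> {pred A}).
Hypothesis G_subspace : forall m, is_subspace (G m).
Hypothesis G_mul : forall m n x y, x \in G m -> y \in G n -> x * y \in G (m + n).

Lemma G_mul_eq (m n p : int) x y : m + n = p -> x \in G m -> y \in G n -> x * y \in G p.
Proof. by move=> <-; exact: G_mul. Qed.

Lemma A_ge_homogeneous (i e : int) x : i <= e -> x \in G e -> A_ge G i x.
Proof.
move=> le_ie Gx; exists [:: e], (fun m => if m == e then x else 0).
split; [by rewrite /= le_ie | split; last by rewrite big_seq1 eqxx].
by move=> m; case: eqP => [->|_] //; have [] := G_subspace m.
Qed.

Lemma graded_hom_shift_mulr (i j : int) a :
  a \in G (j - i) -> graded_hom_shift G i j (fun x => x * a).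
Proof.
move=> Ga; split=> [x y _ _|c x _|b x _|m x _ Gx]; first exact: mulrDl.
- by rewrite scalerAl.
- by rewrite mulrA.
- by apply: G_mul_eq Gx Ga; lia.
Qed.

Lemma graded_hom_shift_mem (i j : int) f m n x : graded_hom_shift G i j f ->
  i <= m -> x \in G m -> n = m + (j - i) -> f x \in G n.
Proof.
move=> [_ _ _ f_deg] le_im Gx ->; have := f_deg (m - i) x.
rewrite subr_ge0 le_im subrKC => /(_ isT Gx); congr (_ \in G _); lia.
Qed.

Lemma graded_hom_shift_eq_mulr (i j : int) f a : graded_hom_shift G i j f ->
  (forall e x, i <= e -> x \in G e -> f x = x * a) ->
  forall x, A_ge G i x -> f x = x * a.
Proof.
move=> [fD fZ _ _] f_hom x [s [xs [le_is [Gxs ->]]]].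
have A_ge_xs m : i <= m -> A_ge G i (xs m) by move/A_ge_homogeneous; apply.
elim: s le_is => [_|m s IHs /andP[le_im le_is]].
  have [G0 _ _] := G_subspace i.
  by rewrite big_nil mul0r -(scale0r (0 : A)) fZ ?scale0r //; apply: A_ge_homogeneous G0.
rewrite big_cons mulrDl -IHs // fD; [by rewrite (f_hom m) | exact: A_ge_xs |].
by exists s, xs.
Qed.

Section FrobeniusForm.
Variables (l : int) (eps : A -> k).
Hypothesis G_finite_dim : forall m, finite_dim (G m).
Hypothesis eps_lin : lin_functional_on (G l) eps.
Hypothesis eps_nondeg : forall d x, x \in G d ->
  (forall y, y \in G (l - d) -> eps (x * y) = 0) -> x = 0.
Hypothesis eps_represents : forall d (g : A -> k), lin_functional_on (G d) g ->
  exists2 x, x \in G (l - d) & forall y, y \in G d -> eps (x * y) = g y.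

Lemma lin_eps_mull (m n : int) u : m + n = l -> u \in G m ->
  lin_functional_on (G n) (fun v => eps (u * v)).
Proof.
have [eD eZ] := eps_lin => mn_l Gu; have Gl := G_mul_eq mn_l Gu.
by split=> [y1 y2 Gy1 Gy2|c y Gy]; rewrite ?mulrDr -?scalerAr ?eD ?eZ ?Gl.
Qed.

Lemma lin_eps_mulr (m n : int) u : m + n = l -> u \in G n ->
  lin_functional_on (G m) (fun v => eps (v * u)).
Proof.
have [eD eZ] := eps_lin => mn_l Gu; have Gl v := @G_mul_eq _ _ _ v _ mn_l ^~ Gu.
by split=> [y1 y2 Gy1 Gy2|c y Gy]; rewrite ?mulrDl -?scalerAl ?eD ?eZ ?Gl.
Qed.

Lemma eps_nondeg_r (d : int) w : w \in G d ->
  (forall z, z \in G (l - d) -> eps (z * w) = 0) -> w = 0.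
Proof.
move=> Gw eps_w0; apply: (eps_nondeg Gw) => y Gy.
have [x Gx eps_x] := eps_represents (@lin_eps_mulr d (l - d) y (subrKC d l) Gy).
by rewrite -eps_x // eps_w0.
Qed.

Section Coordinates.
Variables (d : int) (us vs : seq A).
Hypotheses (us_span : spanning_seq (G d) us) (vs_span : spanning_seq (G (l - d)) vs).

Let deg_us_vs : d + (l - d) = l := subrKC d l.
Let deg_vs_us : l - d + d = l := subrK d l.

Let left_pairing := \matrix_(r < size us, s < size vs) eps (us`_r * vs`_s).
Let right_pairing := \matrix_(r < size us, s < size vs) eps (vs`_s * us`_r).

Lemma us_mem (r : 'I_(size us)) : us`_r \in G d.
Proof. by have [us_in _] := us_span; apply: (allP us_in); apply: mem_nth. Qed.

Lemma vs_mem (s : 'I_(size vs)) : vs`_s \in G (l - d).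
Proof. by have [vs_in _] := vs_span; apply: (allP vs_in); apply: mem_nth. Qed.

Lemma lincomb_us_mem c : lincomb us c \in G d.
Proof. by apply: lincomb_mem; have [] := us_span. Qed.

Lemma left_pairing_coef c s : (c *m left_pairing) 0 s = eps (lincomb us c * vs`_s).
Proof.
have [us_in _] := us_span.
rewrite (mulmx_functional_coef (G_subspace d) (h := fun s u => eps (u * vs`_s))) // => s'.
exact: lin_eps_mulr deg_us_vs (vs_mem s').
Qed.

Lemma right_pairing_coef c s : (c *m right_pairing) 0 s = eps (vs`_s * lincomb us c).
Proof.
have [us_in _] := us_span.
rewrite (mulmx_functional_coef (G_subspace d) (h := fun s u => eps (vs`_s * u))) // => s'.
exact: lin_eps_mull deg_vs_us (vs_mem s').
Qed.

Lemma left_pairing_ker c : (c *m left_pairing == 0) = (lincomb us c == 0).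
Proof.
apply/eqP/eqP => [c_ker|c0]; last first.
  apply/rowP => s.
  by rewrite left_pairing_coef c0 mul0r (lin_functional0 (G_subspace l) eps_lin) mxE.
apply: eps_nondeg (lincomb_us_mem c) _ => y Gy.
apply: (lin_functional_eq0_on_span (G_subspace (l - d))
  (lin_eps_mull deg_us_vs (lincomb_us_mem c)) vs_span) Gy => s.
by rewrite -left_pairing_coef c_ker mxE.
Qed.

Lemma right_pairing_ker c : (c *m right_pairing == 0) = (lincomb us c == 0).
Proof.
apply/eqP/eqP => [c_ker|c0]; last first.
  apply/rowP => s.
  by rewrite right_pairing_coef c0 mulr0 (lin_functional0 (G_subspace l) eps_lin) mxE.
apply: eps_nondeg_r (lincomb_us_mem c) _ => z Gz.
apply: (lin_functional_eq0_on_span (G_subspace (l - d))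
  (lin_eps_mulr deg_vs_us (lincomb_us_mem c)) vs_span) Gz => s.
by rewrite -right_pairing_coef c_ker mxE.
Qed.

Lemma left_pairing_represents h : lin_functional_on (G (l - d)) h ->
  exists c : 'rV_(size us), forall s, (c *m left_pairing) 0 s = h vs`_s.
Proof.
move=> h_lin; have [x Gx eps_x] := eps_represents h_lin.
rewrite opprB addrC subrK in Gx.
have [c x_c] := spanning_seq_lincomb us_span Gx.
by exists c => s; rewrite left_pairing_coef -x_c eps_x // vs_mem.
Qed.

Lemma right_pairing_sub_left : (right_pairing <= left_pairing)%MS.
Proof.
apply/row_subP => r; apply/submxP.
have [c eq_c] := left_pairing_represents (lin_eps_mulr deg_vs_us (us_mem r)).
by exists c; apply/rowP => s; rewrite eq_c !mxE.
Qed.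

(* Both pairing matrices have as left kernel the linear relations among [us],
   so they have the same rank; the rows of the right one lie in the row space
   of the left one, hence the two row spaces coincide. *)
Lemma eps_represents_r_span g : lin_functional_on (G (l - d)) g ->
  exists2 a, a \in G d & forall v, v \in G (l - d) -> eps (v * a) = g v.
Proof.
move=> g_lin; have [c eq_c] := left_pairing_represents g_lin.
have left_sub_right : (left_pairing <= right_pairing)%MS.
  apply: submx_of_same_kernel right_pairing_sub_left _ => c'.
  by rewrite left_pairing_ker right_pairing_ker.
have [c' eq_c'] := submxP (submx_trans (submxMl c _) left_sub_right).
exists (lincomb us c'); first exact: lincomb_us_mem.
apply: (lin_functional_eq_on_span (G_subspace (l - d))
  (lin_eps_mulr deg_vs_us (lincomb_us_mem c')) g_lin vs_span) => s.
by rewrite -right_pairing_coef -eq_c' eq_c.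
Qed.

End Coordinates.

Lemma eps_represents_r (d : int) g : lin_functional_on (G (l - d)) g ->
  exists2 a, a \in G d & forall v, v \in G (l - d) -> eps (v * a) = g v.
Proof.
have [us us_span] : exists us, spanning_seq (G d) us := G_finite_dim d.
have [vs vs_span] : exists vs, spanning_seq (G (l - d)) vs := G_finite_dim (l - d).
exact: (eps_represents_r_span us_span vs_span).
Qed.

Lemma mulr_A_ge_eq0 (i j : int) a : j <= l -> a \in G (j - i) ->
  (forall x, A_ge G i x -> x * a = 0) -> a = 0.
Proof.
move=> le_jl Ga xa0; apply: eps_nondeg_r Ga _ => z Gz.
rewrite xa0 ?(lin_functional0 (G_subspace l) eps_lin) //.
by apply: A_ge_homogeneous Gz; lia.
Qed.

Lemma graded_hom_shift_eq_mulr_homogeneous (i j : int) f a :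
  graded_hom_shift G i j f -> a \in G (j - i) ->
  (forall v, v \in G (l - (j - i)) -> eps (f v) = eps (v * a)) ->
  forall e x, i <= e -> x \in G e -> f x = x * a.
Proof.
move=> f_hom Ga eps_fa e x le_ie Gx; have [_ _ fL _] := f_hom.
have Gfx : f x \in G (e + (j - i)) by apply: graded_hom_shift_mem f_hom le_ie Gx _.
have Gxa : x * a \in G (e + (j - i)) by apply: G_mul Gx Ga.
apply/eqP; rewrite -subr_eq0; apply/eqP.
apply: eps_nondeg_r (subspaceB (G_subspace _) Gfx Gxa) _ => z Gz.
have Gzx : z * x \in G (l - (j - i)) by apply: G_mul_eq Gz Gx; lia.
have Gl : l - (e + (j - i)) + (e + (j - i)) = l by lia.
rewrite mulrBr (lin_functionalB (G_subspace l)) ?(G_mul_eq Gl) //.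
by rewrite -fL ?mulrA ?eps_fa ?subrr //; apply: A_ge_homogeneous Gx.
Qed.

Lemma graded_hom_shift_mulr_surj (i j : int) f : j <= l -> graded_hom_shift G i j f ->
  exists2 a, a \in G (j - i) & forall x, A_ge G i x -> f x = x * a.
Proof.
move=> le_jl f_hom; have [fD fZ _ _] := f_hom; have [eD eZ] := eps_lin.
have le_iv : i <= l - (j - i) by lia.
have A_ge_v v : v \in G (l - (j - i)) -> A_ge G i v by apply: A_ge_homogeneous.
have Gfv v : v \in G (l - (j - i)) -> f v \in G l.
  by move=> Gv; apply: graded_hom_shift_mem f_hom le_iv Gv _; lia.
have g_lin : lin_functional_on (G (l - (j - i))) (fun v => eps (f v)).
  by split=> [v1 v2 Gv1 Gv2|c v Gv]; [rewrite fD ?eD | rewrite fZ ?eZ]; auto.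
have [a Ga eps_a] := eps_represents_r g_lin.
exists a => //; apply: (graded_hom_shift_eq_mulr f_hom).
by apply: (graded_hom_shift_eq_mulr_homogeneous f_hom Ga) => v Gv; rewrite eps_a.
Qed.

End FrobeniusForm.
End GradedAlgebra.

Lemma graded_frobenius_form (k : fieldType) (A : algType k) (G : int -> {pred A}) l :
  graded_frobenius G l -> exists eps : A -> k,
  [/\ lin_functional_on (G l) eps,
      forall d x, x \in G d -> (forall y, y \in G (l - d) -> eps (x * y) = 0) -> x = 0
    & forall d (g : A -> k), lin_functional_on (G d) g ->
        exists2 x, x \in G (l - d) & forall y, y \in G d -> eps (x * y) = g y].
Proof.
move=> [[_ _ _ _ [G1 _]] [_ [phi [_ phi_add phi_scale [phi_inj phi_surj] phi_act]]]].
exists (fun z => phi 0 z 1).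
have phi_eps m x y : x \in G (l + m) -> y \in G (- m) -> phi m x y = phi 0 (x * y) 1.
  by move=> Gx Gy; have := phi_act m (- m) x y 1 Gx Gy; rewrite subrr oppr0 mulr1 => <-.
split.
- by split=> [y1 y2 Gy1 Gy2|c y Gy]; [apply: phi_add | apply: phi_scale]; rewrite ?addr0 ?oppr0.
- move=> d x Gx eps_x0; apply: (phi_inj (d - l)); first by rewrite subrKC.
  by move=> y Gy; rewrite phi_eps ?subrKC //; apply: eps_x0; rewrite -opprB.
- move=> d g g_lin; have [|x Gx phi_x] := phi_surj (- d) g; first by rewrite opprK.
  by exists x => // y Gy; rewrite -phi_x ?opprK // (phi_eps (- d)) ?opprK.
Qed.

Theorem lemma4p14 (k : closedFieldType) (A : algType k) (G : int -> {pred A})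
    (l : int) (i j : int) :
  graded_frobenius G l ->
  0 <= i <= l -> 0 <= j <= l ->
  (* the map a |-> ( . a) is well defined: A_{j-i} -> Hom_{A^o}(A_{>=i}(i), A_{>=j}(j)) *)
  (forall a, a \in G (j - i) -> graded_hom_shift G i j (fun x => x * a)) /\
  (* injective *)
  (forall a, a \in G (j - i) -> (forall x, A_ge G i x -> x * a = 0) -> a = 0) /\
  (* surjective *)
  (forall f, graded_hom_shift G i j f ->
     exists2 a, a \in G (j - i) & forall x, A_ge G i x -> f x = x * a).
Proof.
move=> A_frob _ /andP[_ le_jl].
have [[G_subspace _ _ _ [_ G_mul]] [G_finite_dim _]] := A_frob.
have [eps [eps_lin eps_nondeg eps_represents]] := graded_frobenius_form A_frob.
split; [|split] => [a|a|f].
- exact: (graded_hom_shift_mulr G_mul).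
- exact: (mulr_A_ge_eq0 G_subspace G_mul eps_lin eps_nondeg eps_represents le_jl).
- exact: (graded_hom_shift_mulr_surj G_subspace G_mul G_finite_dim eps_lin
    eps_nondeg eps_represents le_jl).
Qed.
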